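(* For the semi-discretization of the hyperbolized Sainte-Marie system with the energy-conservative fluxes described below (any $\alpha_1,\alpha_2,\alpha_3\in\mathbb{R}$, $\alpha_4=\alpha_2$), if the grid data satisfy the lake-at-rest state $v_i=w_i=p_i=0$ and $h_i+b_i=C$ for all $i$ (with a constant $C$), then $\partial_tu_i=0$ for all $i$.
   Context: State $u=(h,hv,hw,hp)$ with bathymetry $b_i$ attached to cell $i$; $g,c>0$ constants. The scheme is $$\partial_tu_i+\frac{f^{\mathrm{num}}_{i+1/2}-f^{\mathrm{num}}_{i-1/2}}{\Delta x}+\sum_{k=1}^4\Big(\alpha_k\frac{H^{\mathrm{num}}_{k,i+1/2}[\![g_k]\!]_{i+1/2}+H^{\mathrm{num}}_{k,i-1/2}[\![g_k]\!]_{i-1/2}}{2\Delta x}+(1-\alpha_k)H_k(u_i)\frac{[\![g_k]\!]_{i+1/2}+[\![g_k]\!]_{i-1/2}}{2\Delta x}\Big)=0,$$ with $H_1=(0,gh,0,0)^T$, $g_1=b$; $H_2=(0,2p,0,0)^T$, $g_2=b$; $H_3=(0,0,0,c^2h)^T$, $g_3=v$; $H_4=(0,0,0,-2c^2v)^T$, $g_4=b$; $H^{\mathrm{num}}_1=(0,g\{\{h\}\},0,0)^T$, $H^{\mathrm{num}}_2=(0,2\{\{p\}\},0,0)^T$, $H^{\mathrm{num}}_3=(0,0,0,c^2\{\{h\}\})^T$, $H^{\mathrm{num}}_4=(0,0,0,-2c^2\{\{v\}\})^T$; and $f^{\mathrm{num}}=(f^h,f^{hv},f^{hw},f^{hp})$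 with $f^h=\alpha_1\{\{h\}\}\{\{v\}\}+(1-\alpha_1)\{\{hv\}\}$, $f^{hv}=f^h\{\{v\}\}+(1-\alpha_1)g\{\{h\}\}^2+(\alpha_1-\tfrac12)g\{\{h^2\}\}+\alpha_3\{\{p\}\}\{\{h\}\}+(1-\alpha_3)\{\{ph\}\}$, $f^{hw}=f^h\{\{w\}\}$, $f^{hp}=f^h\{\{p\}\}$. Here $\{\{a\}\}=\tfrac12(a_-+a_+)$, $[\![a]\!]=a_+-a_-$, and subscript $i+1/2$ means evaluation at $(u_i,u_{i+1})$. *)

From HB Require Import structures.
From mathcomp Require Import all_boot all_order all_algebra.
Set Implicit Arguments. Unset Strict Implicit. Unset Printing Implicit Defensive.
Import Order.TTheory GRing.Theory Num.Theory.
Local Open Scope ring_scope.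

(* Cell state given in primitive variables (h, v, w, p);
   the conserved state is u = (h, h v, h w, h p). *)
Record st (R : Type) := St { sh : R; sv : R; sw : R; sp : R }.

Section Scheme.
Variable R : realFieldType.

Definition avg (am ap : R) : R := (am + ap) / 2.
Definition jump (am ap : R) : R := ap - am.

Definition flux_h (a1 : R) (L U : st R) : R :=
  a1 * avg (sh L) (sh U) * avg (sv L) (sv U)
  + (1 - a1) * avg (sh L * sv L) (sh U * sv U).
Definition flux_hv (g a1 a3 : R) (L U : st R) : R :=
  flux_h a1 L U * avg (sv L) (sv U)
  + (1 - a1) * g * (avg (sh L) (sh U)) ^+ 2
  + (a1 - 1/2) * g * avg (sh L ^+ 2) (sh U ^+ 2)
  + a3 * avg (sp L) (sp U) * avg (sh L) (sh U)
  + (1 - a3) * avg (sp L * sh L) (sp U * sh U).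
Definition flux_hw (a1 : R) (L U : st R) : R :=
  flux_h a1 L U * avg (sw L) (sw U).
Definition flux_hp (a1 : R) (L U : st R) : R :=
  flux_h a1 L U * avg (sp L) (sp U).

Definition ncterm (dx a : R) (Hn : st R -> st R -> R) (Hl : st R -> R)
    (gk : int -> R) (u : int -> st R) (i : int) : R :=
  a * (Hn (u i) (u (i + 1)) * jump (gk i) (gk (i + 1))
       + Hn (u (i - 1)) (u i) * jump (gk (i - 1)) (gk i)) / (2 * dx)
  + (1 - a) * Hl (u i) * (jump (gk i) (gk (i + 1)) + jump (gk (i - 1)) (gk i))
      / (2 * dx).

Definition dudt (g c dx a1 a2 a3 a4 : R) (b : int -> R) (u : int -> st R)
    (i : int) : R * R * R * R :=
  let bk := b in
  let vk := fun j => sv (u j) in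
  ( - ((flux_h a1 (u i) (u (i + 1)) - flux_h a1 (u (i - 1)) (u i)) / dx),
    - ((flux_hv g a1 a3 (u i) (u (i + 1)) - flux_hv g a1 a3 (u (i - 1)) (u i)) / dx
       + ncterm dx a1 (fun L U => g * avg (sh L) (sh U)) (fun X => g * sh X) bk u i
       + ncterm dx a2 (fun L U => 2 * avg (sp L) (sp U)) (fun X => 2 * sp X) bk u i),
    - ((flux_hw a1 (u i) (u (i + 1)) - flux_hw a1 (u (i - 1)) (u i)) / dx),
    - ((flux_hp a1 (u i) (u (i + 1)) - flux_hp a1 (u (i - 1)) (u i)) / dx
       + ncterm dx a3 (fun L U => c ^+ 2 * avg (sh L) (sh U)) (fun X => c ^+ 2 * sh X) vk u i
       + ncterm dx a4 (fun L U => - (2 * c ^+ 2 * avg (sv L) (sv U)))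
                      (fun X => - (2 * c ^+ 2 * sv X)) bk u i) ).
End Scheme.

(** The mass flux contains only products with averages of [v], so it vanishes
    at rest, and with it the fluxes of [hw] and [hp]; the nonconservative
    terms built on [H_2], [H_3], [H_4] vanish because [p = 0], [[v]] = 0 and
    [v = 0].  What remains in the momentum equation is the hydrostatic part of
    the flux, whose difference across a cell is exactly compensated by the
    term [H_1 [[b]]], because [[b]] = -[[h]] when [h + b] is constant.
    Neither the signs of [g], [c] nor the coupling [alpha_4 = alpha_2] play
    any role. *)

From mathcomp Require Import all_boot all_order all_algebra.
From mathcomp Require Import ring.
Import Order.TTheory GRing.Theory Num.Theory.
Local Open Scope ring_scope.

Section LakeAtRest.
Variable R : realFieldType.
Implicit Types (g dx a C : R) (L U : st R) (b gk : int -> R)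
  (u : int -> st R) (i : int).

Definition hydrostatic_flux g (a1 hL hR : R) : R :=
  (1 - a1) * g * avg hL hR ^+ 2 + (a1 - 1/2) * g * avg (hL ^+ 2) (hR ^+ 2).

Lemma avg00 : avg 0 0 = 0 :> R.
Proof. by rewrite /avg addr0 mul0r. Qed.

Lemma flux_h_still (a1 : R) L U : sv L = 0 -> sv U = 0 -> flux_h a1 L U = 0.
Proof. by move=> vL vU; rewrite /flux_h vL vU !mulr0 avg00 !mulr0 addr0. Qed.

Lemma flux_hv_still g (a1 a3 : R) L U :
  sv L = 0 -> sv U = 0 -> sp L = 0 -> sp U = 0 ->
  flux_hv g a1 a3 L U = hydrostatic_flux g a1 (sh L) (sh U).
Proof.
move=> vL vU pL pU; rewrite /flux_hv /hydrostatic_flux flux_h_still //.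
by rewrite pL pU !mul0r avg00; ring.
Qed.

Lemma ncterm_jump0 dx a Hn Hl gk u i :
  gk (i - 1) = gk i -> gk (i + 1) = gk i -> ncterm dx a Hn Hl gk u i = 0.
Proof. by move=> gm gp; rewrite /ncterm /jump gm gp subrr; ring. Qed.

Lemma ncterm_H0 dx a Hn Hl gk u i :
  Hn (u i) (u (i + 1)) = 0 -> Hn (u (i - 1)) (u i) = 0 -> Hl (u i) = 0 ->
  ncterm dx a Hn Hl gk u i = 0.
Proof. by move=> Hp Hm Hc; rewrite /ncterm Hp Hm Hc; ring. Qed.

Lemma hydrostatic_balance g dx (a1 : R) C b u i :
  dx != 0 -> (forall j, sh (u j) + b j = C) ->
  (hydrostatic_flux g a1 (sh (u i)) (sh (u (i + 1)))
     - hydrostatic_flux g a1 (sh (u (i - 1))) (sh (u i))) / dx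
  + ncterm dx a1 (fun L U => g * avg (sh L) (sh U)) (fun X => g * sh X) b u i
  = 0.
Proof.
move=> dx0 hb; have bE j : b j = C - sh (u j) by rewrite -(hb j) addrC addKr.
by rewrite /hydrostatic_flux /ncterm /avg /jump !bE; field.
Qed.

End LakeAtRest.

Theorem mainTheorem10 (R : realFieldType) (g c dx a1 a2 a3 a4 C : R)
  (b : int -> R) (u : int -> st R) :
  0 < g -> 0 < c -> 0 < dx -> a4 = a2 ->
  (forall i : int, sv (u i) = 0 /\ sw (u i) = 0 /\ sp (u i) = 0 /\
                   sh (u i) + b i = C) ->
  forall i : int, dudt g c dx a1 a2 a3 a4 b u i = (0, 0, 0, 0).
Proof.
move=> _ _ dx_gt0 _ rest i.
have v0 j : sv (u j) = 0 by case: (rest j).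
have p0 j : sp (u j) = 0 by case: (rest j) => _ [_ []].
have hb j : sh (u j) + b j = C by case: (rest j) => _ [_ []].
rewrite /dudt /flux_hw /flux_hp !flux_h_still ?v0 // !flux_hv_still ?v0 ?p0 //.
rewrite (@hydrostatic_balance _ _ _ _ C) ?gt_eqF //.
rewrite (@ncterm_H0 _ _ a2) /= ?p0 ?avg00 ?mulr0 //.
rewrite (@ncterm_jump0 _ _ a3) /= ?v0 //.
rewrite (@ncterm_H0 _ _ a4) /= ?v0 ?avg00 ?mulr0 ?oppr0 //.
by rewrite !mul0r subrr !addr0 !mul0r !oppr0.
Qed.
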